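(* Let $(\mathcal C,\Delta,\delta,\beta,* )$ be a braided $*$-coalgebra and let $M,K:\mathcal C\otimes\mathcal C\to\mathbb C$ be linear (bilinear forms), with $M$ $\beta$-invariant. Then $\widetilde{M\star K}=\widetilde M\circledast\widetilde K$, where $M\star K=(M\otimes K)\circ\Lambda$ and $\circledast$ is the convolution of sesquilinear forms defined below.
   Context: Braided $*$-coalgebra: coassociative counital coalgebra $(\mathcal C,\Delta,\delta)$ with $\beta\in\mathrm{Aut}(\mathcal C\otimes\mathcal C)$ satisfying the braid equation $(\beta\otimes\mathrm{id})(\mathrm{id}\otimes\beta)(\beta\otimes\mathrm{id})=(\mathrm{id}\otimes\beta)(\beta\otimes\mathrm{id})(\mathrm{id}\otimes\beta)$, such that $(\Delta\otimes\mathrm{id})\beta=(\mathrm{id}\otimes\beta)(\beta\otimes\mathrm{id})(\mathrm{id}\otimes\Delta)$, $(\mathrm{id}\otimes\Delta)\beta=(\beta\otimes\mathrm{id})(\mathrm{id}\otimes\beta)(\Delta\otimes\mathrm{id})$, $(\delta\otimes\mathrm{id})\beta=\mathrm{id}\otimes\delta$, $(\mathrm{id}\otimes\delta)\beta=\delta\otimes\mathrm{id}$, together with an antilinear involution $*$ such that $\Delta\circ*=\beta\circ( *\otimes* )\circ\tau\circ\Delta$, $\delta(c^* )=\overline{\delta(c)}$, and $\beta\circ( *\otimes* )\circ\tau=( *\otimes* )\circ\tau\circ\beta^{-1}$, $\tau$ the flip. $\Lambda:=(\mathrm{id}\otimes\beta\otimes\mathrm{id})(\Delta\otimes\Delta)$.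 A functional $M$ on $\mathcal C\otimes\mathcal C$ is $\beta$-invariant if $(M\otimes\mathrm{id})\circ(\mathrm{id}\otimes\beta)\circ(\beta\otimes\mathrm{id})=\mathrm{id}\otimes M$ on $\mathcal C^{\otimes3}$. The conjugate space $\overline{\mathcal C}=\{\bar c:c\in\mathcal C\}$ has operations $\bar v+\lambda\bar w:=\overline{v+\bar\lambda w}$; write $\overline{a\otimes b}:=\bar a\otimes\bar b$ and define $\overline\Delta:\overline{\mathcal C}\to\overline{\mathcal C}\otimes\overline{\mathcal C}$ by $\overline\Delta(\bar c)=\overline{\Delta(c)}$. A sesquilinear form is a linear map $\overline{\mathcal C}\otimes\mathcal C\to\mathbb C$; for a bilinear form $K$ put $\widetilde K(\bar a\otimes b):=K(a^*\otimes b)$. For sesquilinear forms $P,Q$: $P\circledast Q:=(P\otimes Q)\circ(\mathrm{id}\otimes\tau\otimes\mathrm{id})\circ(\overline\Delta\otimes\Delta)$. *)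

(* Braided *-coalgebras, modelled over an arbitrary
   numClosedFieldType F (e.g. the complex numbers), with tensor products
   given abstractly by their universal property. *)
From HB Require Import structures.
From mathcomp Require Import all_boot all_algebra.
From Stdlib Require Import ClassicalEpsilon.
Set Implicit Arguments. Unset Strict Implicit. Unset Printing Implicit Defensive.
Import GRing.Theory Num.Theory.
Local Open Scope ring_scope.

Section Defs.
Variable F : numClosedFieldType.

Definition linmap (U X : lmodType F) (g : U -> X) : Prop :=
  forall (a : F) (x y : U), g (a *: x + y) = a *: g x + g y.

Definition bilin (U1 U2 X : lmodType F) (f : U1 -> U2 -> X) : Prop :=
  (forall b, linmap (fun a => f a b)) /\ (forall a, linmap (f a)).

Definition trilin (U1 U2 U3 X : lmodType F) (f : U1 -> U2 -> U3 -> X) : Prop :=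
  (forall b c, linmap (fun a => f a b c)) /\ (forall a c, linmap (fun b => f a b c))
  /\ (forall a b, linmap (f a b)).

Definition quadlin (U1 U2 U3 U4 X : lmodType F) (f : U1 -> U2 -> U3 -> U4 -> X) : Prop :=
  [/\ (forall b c d, linmap (fun a => f a b c d)), (forall a c d, linmap (fun b => f a b c d)),
      (forall a b d, linmap (fun c => f a b c d)) & (forall a b c, linmap (f a b c))].

Definition is_tensor2 (U1 U2 T : lmodType F) (t : U1 -> U2 -> T) : Prop :=
  [/\ bilin t,
      (forall w : T, exists s : seq (U1 * U2), w = \sum_(p <- s) t p.1 p.2) &
      (forall (X : lmodType F) (f : U1 -> U2 -> X), bilin f ->
         exists g : T -> X, linmap g /\ forall a b, g (t a b) = f a b)].

Definition is_tensor3 (U1 U2 U3 T : lmodType F) (t : U1 -> U2 -> U3 -> T) : Prop :=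
  [/\ trilin t,
      (forall w : T, exists s : seq (U1 * U2 * U3),
          w = \sum_(p <- s) t p.1.1 p.1.2 p.2) &
      (forall (X : lmodType F) (f : U1 -> U2 -> U3 -> X), trilin f ->
         exists g : T -> X, linmap g /\ forall a b c, g (t a b c) = f a b c)].

Definition is_tensor4 (U1 U2 U3 U4 T : lmodType F) (t : U1 -> U2 -> U3 -> U4 -> T) : Prop :=
  [/\ quadlin t,
      (forall w : T, exists s : seq (U1 * U2 * U3 * U4),
          w = \sum_(p <- s) t p.1.1.1 p.1.1.2 p.1.2 p.2) &
      (forall (X : lmodType F) (f : U1 -> U2 -> U3 -> U4 -> X), quadlin f ->
         exists g : T -> X, linmap g /\ forall a b c d, g (t a b c d) = f a b c d)].

(* The linear map on a tensor product determined by its values on pure tensors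
   (well defined whenever f is multilinear and (T,t) is a tensor product). *)
Definition ext2 (U1 U2 T X : lmodType F) (t : U1 -> U2 -> T) (f : U1 -> U2 -> X) : T -> X :=
  epsilon (inhabits (fun _ => 0))
    (fun g : T -> X => linmap g /\ forall a b, g (t a b) = f a b).

Definition ext3 (U1 U2 U3 T X : lmodType F) (t : U1 -> U2 -> U3 -> T)
  (f : U1 -> U2 -> U3 -> X) : T -> X :=
  epsilon (inhabits (fun _ => 0))
    (fun g : T -> X => linmap g /\ forall a b c, g (t a b c) = f a b c).

Definition ext4 (U1 U2 U3 U4 T X : lmodType F) (t : U1 -> U2 -> U3 -> U4 -> T)
  (f : U1 -> U2 -> U3 -> U4 -> X) : T -> X :=
  epsilon (inhabits (fun _ => 0))
    (fun g : T -> X => linmap g /\ forall a b c d, g (t a b c d) = f a b c d).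

Definition conjsp (V : lmodType F) : Type := V.
Section Conj.
Variable V : lmodType F.
HB.instance Definition _ := GRing.Zmodule.on (conjsp V).
Let cscale (a : F) (v : conjsp V) : conjsp V := (a^* *: (v : V)).
Fact cscaleA a b v : cscale a (cscale b v) = cscale (a * b) v.
Proof. by rewrite /cscale scalerA rmorphM mulrC. Qed.
Fact cscale1 : left_id 1 cscale.
Proof. by move=> v; rewrite /cscale rmorph1 scale1r. Qed.
Fact cscaleDr : right_distributive cscale +%R.
Proof. by move=> a u v; rewrite /cscale scalerDr. Qed.
Fact cscaleDl v : {morph cscale^~ v : a b / a + b}.
Proof. by move=> a b; rewrite /cscale rmorphD scalerDl. Qed.
HB.instance Definition _ :=
  GRing.Zmodule_isLmodule.Build F (conjsp V) cscaleA cscale1 cscaleDr cscaleDl.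
End Conj.


Section Coalg.
Variables (C C2 C3 : lmodType F).
Variables (t2 : C -> C -> C2) (t3 : C -> C -> C -> C3).
Variables (Delta : C -> C2) (delta : C -> F^o) (beta betainv : C2 -> C2).
Variable star : C -> C.

Definition DeltaId : C2 -> C3 :=
  ext2 t2 (fun a b => ext2 t2 (fun x y => t3 x y b) (Delta a)).
Definition IdDelta : C2 -> C3 :=
  ext2 t2 (fun a b => ext2 t2 (fun x y => t3 a x y) (Delta b)).
Definition betaId : C3 -> C3 :=
  ext3 t3 (fun a b c => ext2 t2 (fun x y => t3 x y c) (beta (t2 a b))).
Definition IdBeta : C3 -> C3 :=
  ext3 t3 (fun a b c => ext2 t2 (fun x y => t3 a x y) (beta (t2 b c))).
(* delta (x) id, id (x) delta : C (x) C -> C  (using F (x) C = C = C (x) F) *)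
Definition deltaId : C2 -> C := ext2 t2 (fun a b => delta a *: b).
Definition IdDelta0 : C2 -> C := ext2 t2 (fun a b => delta b *: a).
(* ( * (x) * ) o tau : C (x) C -> C (x) C, an antilinear map,
   i.e. a linear map C (x) C -> conj(C (x) C) *)
Definition starFlip : C2 -> conjsp C2 :=
  ext2 t2 (fun a b => (t2 (star b) (star a) : conjsp C2)).

Definition braided_star_coalgebra : Prop :=
  [/\ [/\ linmap Delta, linmap delta, linmap beta,
          cancel beta betainv & cancel betainv beta],
      (forall c, DeltaId (Delta c) = IdDelta (Delta c)),
      (forall c, deltaId (Delta c) = c /\ IdDelta0 (Delta c) = c),
      (forall w, betaId (IdBeta (betaId w)) = IdBeta (betaId (IdBeta w))) /\
      [/\ (forall w, DeltaId (beta w) = IdBeta (betaId (IdDelta w))),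
          (forall w, IdDelta (beta w) = betaId (IdBeta (DeltaId w))),
          (forall w, deltaId (beta w) = IdDelta0 w) &
          (forall w, IdDelta0 (beta w) = deltaId w)] &
      [/\ (forall (a : F) x y, star (a *: x + y) = a^* *: star x + star y),
          (forall x, star (star x) = x),
          (forall c, Delta (star c) = beta (starFlip (Delta c))),
          (forall c, delta (star c) = (delta c)^*) &
          (forall w, beta (starFlip w) = starFlip (betainv w))]].

Definition MId (M : C2 -> F^o) : C3 -> C := ext3 t3 (fun a b c => M (t2 a b) *: c).
Definition IdM (M : C2 -> F^o) : C3 -> C := ext3 t3 (fun a b c => M (t2 b c) *: a).
Definition beta_invariant (M : C2 -> F^o) : Prop :=
  forall w, MId M (IdBeta (betaId w)) = IdM M w.

Variables (C4 : lmodType F) (t4 : C -> C -> C -> C -> C4).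
Definition DeltaDelta : C2 -> C4 :=
  ext2 t2 (fun a b => ext2 t2 (fun x y => ext2 t2 (fun u v => t4 x y u v) (Delta b))
                             (Delta a)).
Definition IdBetaId : C4 -> C4 :=
  ext4 t4 (fun a b c d => ext2 t2 (fun x y => t4 a x y d) (beta (t2 b c))).
Definition Lambda (w : C2) : C4 := IdBetaId (DeltaDelta w).
Definition tensorFun (M K : C2 -> F^o) : C4 -> F^o :=
  ext4 t4 (fun a b c d => (M (t2 a b) * K (t2 c d) : F^o)).
Definition starprod (M K : C2 -> F^o) (w : C2) : F^o := tensorFun M K (Lambda w).

(* sesquilinear forms: linear maps conj(C) (x) C -> F *)
Variables (CbC : lmodType F) (s2 : conjsp C -> C -> CbC).
Definition tildeF (K : C2 -> F^o) : CbC -> F^o :=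
  ext2 s2 (fun (a : conjsp C) (b : C) => K (t2 (star a) b)).

Variables (CbCb : lmodType F) (b2 : conjsp C -> conjsp C -> CbCb).
Variables (Mx1 : lmodType F) (m1 : conjsp C -> conjsp C -> C -> C -> Mx1).
Variables (Mx2 : lmodType F) (m2 : conjsp C -> C -> conjsp C -> C -> Mx2).
Definition bar2 : C2 -> conjsp CbCb :=
  ext2 t2 (fun a b => (b2 a b : conjsp CbCb)).
Definition DeltaBar (c : conjsp C) : CbCb := bar2 (Delta c).
Definition DeltaBarDelta : CbC -> Mx1 :=
  ext2 s2 (fun a b => ext2 b2 (fun x y => ext2 t2 (fun u v => m1 x y u v) (Delta b))
                             (DeltaBar a)).
Definition IdTauId : Mx1 -> Mx2 := ext4 m1 (fun x y u v => m2 x u y v).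
Definition sesqTensor (P Q : CbC -> F^o) : Mx2 -> F^o :=
  ext4 m2 (fun x u y v => (P (s2 x u) * Q (s2 y v) : F^o)).
Definition conv (P Q : CbC -> F^o) (w : CbC) : F^o :=
  sesqTensor P Q (IdTauId (DeltaBarDelta w)).

End Coalg.
End Defs.

From HB Require Import structures.
From mathcomp Require Import all_boot all_algebra.
From Stdlib Require Import ClassicalEpsilon.
Set Implicit Arguments. Unset Strict Implicit. Unset Printing Implicit Defensive.
Import GRing.Theory Num.Theory.
Local Open Scope ring_scope.

(* Both sides are linear maps on conj(C) (x) C, so it suffices to compare them on
   pure tensors abar (x) b.  Write Delta a = sum_p p1 (x) p2, Delta b = sum_r r1 (x) r2.
   - Right side: unfolding Deltabar (x) Delta, id (x) tau (x) id and P (x) Q gives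
     sum_p sum_r M(p1^* (x) r1) K(p2^* (x) r2).
   - Left side: Delta (a^* ) = sum_p beta (p2^* (x) p1^* ), so Lambda (a^* (x) b) is a sum
     of terms (id (x) beta (x) id)(beta (x (x) y) (x) u (x) v), and beta-invariance of M
     says exactly that M (x) K sends such a term to M(y (x) u) K(x (x) v)
     (lemma tensorFun_braid); this yields the same double sum. *)

Section LinearMaps.
Variable F : numClosedFieldType.

Lemma linD (U X : lmodType F) (g : U -> X) : linmap g -> forall x y, g (x + y) = g x + g y.
Proof. by move=> hg x y; have := hg 1 x y; rewrite !scale1r. Qed.

Lemma lin0 (U X : lmodType F) (g : U -> X) : linmap g -> g 0 = 0.
Proof.
move=> hg; have E := linD hg 0 0; rewrite addr0 in E.
by apply: (addrI (g 0)); rewrite addr0 -E.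
Qed.

Lemma linZ (U X : lmodType F) (g : U -> X) : linmap g -> forall a x, g (a *: x) = a *: g x.
Proof. by move=> hg a x; have := hg a x 0; rewrite (lin0 hg) !addr0. Qed.

Lemma linsum (U X : lmodType F) (g : U -> X) (I : Type) (s : seq I) (f : I -> U) :
  linmap g -> g (\sum_(i <- s) f i) = \sum_(i <- s) g (f i).
Proof. by move=> hg; apply: big_morph; [exact: linD | exact: lin0]. Qed.

Lemma lin_comp (U V X : lmodType F) (g : V -> X) (h : U -> V) :
  linmap g -> linmap h -> linmap (fun x => g (h x)).
Proof. by move=> hg hh a x y; rewrite hh hg. Qed.

Lemma lin_add (U X : lmodType F) (g1 g2 : U -> X) :
  linmap g1 -> linmap g2 -> linmap (fun x => g1 x + g2 x).
Proof. by move=> h1 h2 a x y; rewrite h1 h2 scalerDr addrACA. Qed.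

Lemma lin_scale (U X : lmodType F) (c : F) (g : U -> X) :
  linmap g -> linmap (fun x => c *: g x).
Proof. by move=> hg a x y; rewrite hg scalerDr !scalerA [c * a]mulrC. Qed.

Lemma lin_sum (U X : lmodType F) (I : Type) (s : seq I) (G : I -> U -> X) :
  (forall i, linmap (G i)) -> linmap (fun x => \sum_(i <- s) G i x).
Proof.
move=> hG; elim: s => [|i s IH] a x y; first by rewrite !big_nil scaler0 addr0.
by rewrite !big_cons hG IH scalerDr addrACA.
Qed.

Lemma lin_scalel (U X : lmodType F) (g : U -> F^o) (c : X) :
  linmap g -> linmap (fun x => g x *: c).
Proof. by move=> hg a x y; rewrite hg scalerDl scalerA. Qed.

(* Antilinear maps are linear maps into (or out of) the conjugate space. *)
Lemma lin_conjL (U X : lmodType F) (g : U -> conjsp X) :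
  linmap g -> linmap (fun x : conjsp U => (g x : X)).
Proof. by move=> hg a x y; have := hg a^* x y; rewrite /GRing.scale /= conjCK. Qed.

Lemma lin_conjR (U X : lmodType F) (g : conjsp U -> X) :
  linmap g -> linmap (fun x : U => (g x : conjsp X)).
Proof. by move=> hg a x y; have := hg a^* x y; rewrite /GRing.scale /= conjCK. Qed.

Lemma conj_sum (V : lmodType F) (I : Type) (s : seq I) (f : I -> V) :
  ((\sum_(i <- s) (f i : conjsp V) : conjsp V) : V) = \sum_(i <- s) f i.
Proof. by []. Qed.

End LinearMaps.

Section Multilinear.
Variable F : numClosedFieldType.

Lemma trilin12 (U1 U2 U3 X : lmodType F) (f : U1 -> U2 -> U3 -> X) :
  trilin f -> forall c, bilin (fun a b => f a b c).
Proof. by case=> h1 [h2 _] c; split=> [b|a]; [exact: h1 | exact: h2]. Qed.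

Lemma trilin23 (U1 U2 U3 X : lmodType F) (f : U1 -> U2 -> U3 -> X) :
  trilin f -> forall a, bilin (f a).
Proof. by case=> _ [h2 h3] a; split=> [c|b]; [exact: h2 | exact: h3]. Qed.

Lemma quadlin12 (U1 U2 U3 U4 X : lmodType F) (f : U1 -> U2 -> U3 -> U4 -> X) :
  quadlin f -> forall c d, bilin (fun a b => f a b c d).
Proof. by case=> h1 h2 _ _ c d; split=> [b|a]; [exact: h1 | exact: h2]. Qed.

Lemma quadlin23 (U1 U2 U3 U4 X : lmodType F) (f : U1 -> U2 -> U3 -> U4 -> X) :
  quadlin f -> forall a d, bilin (fun b c => f a b c d).
Proof. by case=> _ h2 h3 _ a d; split=> [c|b]; [exact: h2 | exact: h3]. Qed.

Lemma quadlin34 (U1 U2 U3 U4 X : lmodType F) (f : U1 -> U2 -> U3 -> U4 -> X) :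
  quadlin f -> forall a b, bilin (f a b).
Proof. by case=> _ _ h3 h4 a b; split=> [d|c]; [exact: h3 | exact: h4]. Qed.

Lemma prod_quadlin (U1 U2 U3 U4 S1 S2 : lmodType F)
    (s1 : U1 -> U2 -> S1) (s2 : U3 -> U4 -> S2) (P : S1 -> F^o) (Q : S2 -> F^o) :
  bilin s1 -> bilin s2 -> linmap P -> linmap Q ->
  quadlin (fun a b c d => (P (s1 a b) * Q (s2 c d) : F^o)).
Proof.
move=> [h1l h1r] [h2l h2r] hP hQ.
split=> [b c d|a c d|a b d|a b c] al x y.
- by rewrite (lin_comp hP (h1l b)) mulrDl scalerAl.
- by rewrite (lin_comp hP (h1r a)) mulrDl scalerAl.
- by rewrite (lin_comp hQ (h2l d)) mulrDr /GRing.scale /= mulrCA.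
- by rewrite (lin_comp hQ (h2r c)) mulrDr /GRing.scale /= mulrCA.
Qed.

End Multilinear.

Section Tensors.
Variable F : numClosedFieldType.

Section Tensor2.
Variables (U1 U2 T : lmodType F) (t : U1 -> U2 -> T).
Hypothesis hT : is_tensor2 t.

Lemma tensor2_span (w : T) : exists s : seq (U1 * U2), w = \sum_(p <- s) t p.1 p.2.
Proof. by case: hT => _ span _; exact: span. Qed.

Lemma tensor2_ext (X : lmodType F) (g1 g2 : T -> X) : linmap g1 -> linmap g2 ->
  (forall a b, g1 (t a b) = g2 (t a b)) -> forall w, g1 w = g2 w.
Proof.
move=> h1 h2 E w; have [s ->] := tensor2_span w.
by rewrite (linsum _ _ h1) (linsum _ _ h2); apply: eq_bigr.
Qed.

Lemma ext2_spec (X : lmodType F) (f : U1 -> U2 -> X) : bilin f ->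
  linmap (ext2 t f) /\ forall a b, ext2 t f (t a b) = f a b.
Proof. by case: hT => _ _ univ hf; exact: (epsilon_spec _ _ (univ _ _ hf)). Qed.

Lemma ext2_lin (X : lmodType F) (f : U1 -> U2 -> X) : bilin f -> linmap (ext2 t f).
Proof. by move=> hf; case: (ext2_spec hf). Qed.

Lemma ext2_pure (X : lmodType F) (f : U1 -> U2 -> X) : bilin f ->
  forall a b, ext2 t f (t a b) = f a b.
Proof. by move=> hf; case: (ext2_spec hf). Qed.

Lemma ext2_param (P X : lmodType F) (Phi : P -> U1 -> U2 -> X) :
  (forall p, bilin (Phi p)) -> (forall a b, linmap (fun p => Phi p a b)) ->
  forall w, linmap (fun p => ext2 t (Phi p) w).
Proof.
move=> hb hl w al p q; move: w; apply: tensor2_ext.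
- exact: ext2_lin.
- by apply: lin_add; [apply: lin_scale|]; apply: ext2_lin.
- by move=> a b; rewrite !ext2_pure // hl.
Qed.

Lemma ext2_sum (X : lmodType F) (I : Type) (s : seq I) (f : I -> U1 -> U2 -> X)
    (g : U1 -> U2 -> X) :
  (forall i, bilin (f i)) -> (forall a b, g a b = \sum_(i <- s) f i a b) ->
  forall w, ext2 t g w = \sum_(i <- s) ext2 t (f i) w.
Proof.
move=> hf hg.
have hgb : bilin g.
  split=> [b|a] al x y; rewrite !hg.
  - exact: (lin_sum (G := fun i x => f i x b) _ (fun i => (hf i).1 b)).
  - exact: (lin_sum (G := fun i => f i a) _ (fun i => (hf i).2 a)).
apply: tensor2_ext; first exact: ext2_lin.
  by apply: lin_sum => i; exact: ext2_lin.
by move=> a b; rewrite ext2_pure // hg; apply: eq_bigr => i _; rewrite ext2_pure.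
Qed.

End Tensor2.

Lemma ext3_spec (U1 U2 U3 T X : lmodType F) (t : U1 -> U2 -> U3 -> T)
    (f : U1 -> U2 -> U3 -> X) : is_tensor3 t -> trilin f ->
  linmap (ext3 t f) /\ forall a b c, ext3 t f (t a b c) = f a b c.
Proof. by case=> _ _ univ hf; exact: (epsilon_spec _ _ (univ _ _ hf)). Qed.

Lemma ext4_spec (U1 U2 U3 U4 T X : lmodType F) (t : U1 -> U2 -> U3 -> U4 -> T)
    (f : U1 -> U2 -> U3 -> U4 -> X) : is_tensor4 t -> quadlin f ->
  linmap (ext4 t f) /\ forall a b c d, ext4 t f (t a b c d) = f a b c d.
Proof. by case=> _ _ univ hf; exact: (epsilon_spec _ _ (univ _ _ hf)). Qed.

Section NestedExtension.
Variables (U1 U2 V1 V2 T1 T2 X : lmodType F).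
Variables (t1 : U1 -> U2 -> T1) (t2 : V1 -> V2 -> T2).
Hypotheses (h1 : is_tensor2 t1) (h2 : is_tensor2 t2).
Variables (f : U1 -> U2 -> V1 -> V2 -> X) (hf : quadlin f).

Lemma ext2_inner_bilin (W : T2) : bilin (fun x y => ext2 t2 (fun u v => f x y u v) W).
Proof.
case: hf => f1 f2 _ _; split=> [y|x].
- apply: (ext2_param h2 (Phi := fun x u v => f x y u v)) => [x|u v]; last exact: f1.
  exact: quadlin34.
- apply: (ext2_param h2 (Phi := fun y u v => f x y u v)) => [y|u v]; last exact: f2.
  exact: quadlin34.
Qed.

Lemma ext2_nested_bilin (A B : lmodType F) (D1 : A -> T1) (D2 : B -> T2) :
  linmap D1 -> linmap D2 ->
  bilin (fun a b => ext2 t1 (fun x y => ext2 t2 (fun u v => f x y u v) (D2 b)) (D1 a)).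
Proof.
move=> hD1 hD2; split=> [b|a].
- exact: (lin_comp (ext2_lin h1 (ext2_inner_bilin _)) hD1).
- apply: (ext2_param h1 (Phi := fun b x y => ext2 t2 (fun u v => f x y u v) (D2 b))).
    by move=> b; exact: ext2_inner_bilin.
  by move=> x y; exact: (lin_comp (ext2_lin h2 (quadlin34 hf x y)) hD2).
Qed.

End NestedExtension.

Section InsertLinearMap.
Variables (U T X : lmodType F) (t : U -> U -> T) (B : T -> T).
Hypotheses (hT : is_tensor2 t) (hB : linmap B).

Lemma insert12_trilin (f : U -> U -> U -> X) : trilin f ->
  trilin (fun a b c => ext2 t (fun x y => f x y c) (B (t a b))).
Proof.
have [[tl tr] _ _] := hT; move=> hf; have [_ [_ f3]] := hf.
split; [|split].
- by move=> b c; exact: (lin_comp (ext2_lin hT (trilin12 hf c)) (lin_comp hB (tl b))).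
- by move=> a c; exact: (lin_comp (ext2_lin hT (trilin12 hf c)) (lin_comp hB (tr a))).
- move=> a b; apply: (ext2_param hT (Phi := fun c x y => f x y c)) => [c|x y].
    exact: trilin12.
  exact: f3.
Qed.

Lemma insert23_trilin (f : U -> U -> U -> X) : trilin f ->
  trilin (fun a b c => ext2 t (fun x y => f a x y) (B (t b c))).
Proof.
have [[tl tr] _ _] := hT; move=> hf; have [f1 _] := hf.
split; [|split].
- move=> b c; apply: (ext2_param hT (Phi := fun a x y => f a x y)) => [a|x y].
    exact: trilin23.
  exact: f1.
- by move=> a c; exact: (lin_comp (ext2_lin hT (trilin23 hf a)) (lin_comp hB (tl c))).
- by move=> a b; exact: (lin_comp (ext2_lin hT (trilin23 hf a)) (lin_comp hB (tr b))).
Qed.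

Lemma insert23_quadlin (f : U -> U -> U -> U -> X) : quadlin f ->
  quadlin (fun a b c d => ext2 t (fun x y => f a x y d) (B (t b c))).
Proof.
have [[tl tr] _ _] := hT; move=> hf; have [f1 _ _ f4] := hf.
split=> [b c d|a c d|a b d|a b c].
- apply: (ext2_param hT (Phi := fun a x y => f a x y d)) => [a|x y]; last exact: f1.
  exact: quadlin23.
- exact: (lin_comp (ext2_lin hT (quadlin23 hf a d)) (lin_comp hB (tl c))).
- exact: (lin_comp (ext2_lin hT (quadlin23 hf a d)) (lin_comp hB (tr b))).
- apply: (ext2_param hT (Phi := fun d x y => f a x y d)) => [d|x y]; last exact: f4.
  exact: quadlin23.
Qed.

End InsertLinearMap.

End Tensors.

Section BraidedStarCoalgebra.
Variables (F : numClosedFieldType) (C : lmodType F).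
Variables (C2 : lmodType F) (t2 : C -> C -> C2) (C3 : lmodType F) (t3 : C -> C -> C -> C3).
Variables (C4 : lmodType F) (t4 : C -> C -> C -> C -> C4).
Variables (CbC : lmodType F) (s2 : conjsp C -> C -> CbC).
Variables (CbCb : lmodType F) (b2 : conjsp C -> conjsp C -> CbCb).
Variables (Mx1 : lmodType F) (m1 : conjsp C -> conjsp C -> C -> C -> Mx1).
Variables (Mx2 : lmodType F) (m2 : conjsp C -> C -> conjsp C -> C -> Mx2).
Hypotheses (hC2 : is_tensor2 t2) (hC3 : is_tensor3 t3) (hC4 : is_tensor4 t4).
Hypotheses (hCbC : is_tensor2 s2) (hCbCb : is_tensor2 b2).
Hypotheses (hMx1 : is_tensor4 m1) (hMx2 : is_tensor4 m2).
Variables (Delta : C -> C2) (delta : C -> F^o) (beta betainv : C2 -> C2) (star : C -> C).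
Hypothesis hC : braided_star_coalgebra t2 t3 Delta delta beta betainv star.

Let t2_bilin : bilin t2. Proof. by case: hC2. Qed.
Let t2_linl b : linmap (fun a => t2 a b). Proof. exact: t2_bilin.1. Qed.
Let t2_linr a : linmap (t2 a). Proof. exact: t2_bilin.2. Qed.
Let t3_trilin : trilin t3. Proof. by case: hC3. Qed.
Let t4_quadlin : quadlin t4. Proof. by case: hC4. Qed.
Let s2_bilin : bilin s2. Proof. by case: hCbC. Qed.
Let b2_bilin : bilin b2. Proof. by case: hCbCb. Qed.
Let m1_quadlin : quadlin m1. Proof. by case: hMx1. Qed.
Let m2_quadlin : quadlin m2. Proof. by case: hMx2. Qed.

Let Delta_lin : linmap Delta. Proof. by case: hC => [[]]. Qed.
Let beta_lin : linmap beta. Proof. by case: hC => [[]]. Qed.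
Let star_antilin (a : F) x y : star (a *: x + y) = a^* *: star x + star y.
Proof. by case: hC => _ _ _ _ []. Qed.
Let Delta_star c : Delta (star c) = beta (starFlip t2 star (Delta c)).
Proof. by case: hC => _ _ _ _ []. Qed.

Lemma star_lin : linmap (fun x : conjsp C => star x).
Proof. by move=> a x y; rewrite /GRing.scale /= star_antilin conjCK. Qed.

Lemma starFlip_bilin : bilin (fun a b => (t2 (star b) (star a) : conjsp C2)).
Proof.
split=> [b|a].
- exact: (lin_conjR (g := fun a : conjsp C => t2 (star b) (star a))
            (lin_comp (t2_linr _) star_lin)).
- exact: (lin_conjR (g := fun b : conjsp C => t2 (star b) (star a))
            (lin_comp (t2_linl _) star_lin)).
Qed.

Lemma starFlip_lin : linmap (starFlip t2 star).
Proof. exact: (ext2_lin hC2 starFlip_bilin). Qed.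

Lemma starFlip_pure a b : starFlip t2 star (t2 a b) = t2 (star b) (star a).
Proof. exact: (ext2_pure hC2 starFlip_bilin). Qed.

Lemma Delta_star_expand c (s : seq (C * C)) :
  Delta c = \sum_(p <- s) t2 p.1 p.2 ->
  Delta (star c) = \sum_(p <- s) beta (t2 (star p.2) (star p.1)).
Proof.
move=> Ec; rewrite Delta_star Ec (linsum _ _ starFlip_lin) conj_sum (linsum _ _ beta_lin).
by apply: eq_bigr => p _; rewrite starFlip_pure.
Qed.

Lemma betaId_pure a b c :
  betaId t2 t3 beta (t3 a b c) = ext2 t2 (fun x y => t3 x y c) (beta (t2 a b)).
Proof. by case: (ext3_spec hC3 (insert12_trilin hC2 beta_lin t3_trilin)) => _ pure; exact: pure. Qed.

Lemma IdBeta_lin : linmap (IdBeta t2 t3 beta).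
Proof. by case: (ext3_spec hC3 (insert23_trilin hC2 beta_lin t3_trilin)). Qed.

Lemma IdBeta_pure a b c :
  IdBeta t2 t3 beta (t3 a b c) = ext2 t2 (fun x y => t3 a x y) (beta (t2 b c)).
Proof. by case: (ext3_spec hC3 (insert23_trilin hC2 beta_lin t3_trilin)) => _ pure; exact: pure. Qed.

Lemma IdBetaId_lin : linmap (IdBetaId t2 beta t4).
Proof. by case: (ext4_spec hC4 (insert23_quadlin hC2 beta_lin t4_quadlin)). Qed.

Lemma IdBetaId_pure a b c d :
  IdBetaId t2 beta t4 (t4 a b c d) = ext2 t2 (fun x y => t4 a x y d) (beta (t2 b c)).
Proof. by case: (ext4_spec hC4 (insert23_quadlin hC2 beta_lin t4_quadlin)) => _ pure; exact: pure. Qed.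

Lemma DeltaDelta_bilin :
  bilin (fun a b => ext2 t2 (fun x y => ext2 t2 (fun u v => t4 x y u v) (Delta b)) (Delta a)).
Proof. exact: (ext2_nested_bilin hC2 hC2 t4_quadlin Delta_lin Delta_lin). Qed.

Lemma DeltaDelta_expand c b (s : seq (C * C)) :
  Delta b = \sum_(r <- s) t2 r.1 r.2 ->
  DeltaDelta t2 Delta t4 (t2 c b) =
  \sum_(r <- s) ext2 t2 (fun x y => t4 x y r.1 r.2) (Delta c).
Proof.
move=> Eb; rewrite /DeltaDelta (ext2_pure hC2 DeltaDelta_bilin).
apply: (ext2_sum hC2) => [r|x y]; first exact: quadlin12.
rewrite Eb (linsum _ _ (ext2_lin hC2 (quadlin34 t4_quadlin x y))).
by apply: eq_bigr => r _; rewrite (ext2_pure hC2 (quadlin34 t4_quadlin x y)).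
Qed.

Lemma bar2_bilin : bilin (fun a b : C => (b2 a b : conjsp CbCb)).
Proof.
split=> [b|a].
- exact: (lin_conjR (g := fun a : conjsp C => b2 a b) (b2_bilin.1 b)).
- exact: (lin_conjR (g := fun b : conjsp C => b2 a b) (b2_bilin.2 a)).
Qed.

Lemma DeltaBar_lin : linmap (fun c : conjsp C => DeltaBar t2 Delta b2 c).
Proof.
exact: (lin_conjL (g := fun c : C => bar2 t2 b2 (Delta c))
          (lin_comp (ext2_lin hC2 bar2_bilin) Delta_lin)).
Qed.

Lemma DeltaBarDelta_bilin :
  bilin (fun a b => ext2 b2 (fun x y => ext2 t2 (fun u v => m1 x y u v) (Delta b))
                           (DeltaBar t2 Delta b2 a)).
Proof. exact: (ext2_nested_bilin hCbCb hC2 m1_quadlin DeltaBar_lin Delta_lin). Qed.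

Lemma DeltaBarDelta_lin : linmap (DeltaBarDelta t2 Delta s2 b2 m1).
Proof. exact: (ext2_lin hCbC DeltaBarDelta_bilin). Qed.

Lemma DeltaBarDelta_expand (a : conjsp C) b (sa sb : seq (C * C)) :
  Delta a = \sum_(p <- sa) t2 p.1 p.2 -> Delta b = \sum_(r <- sb) t2 r.1 r.2 ->
  DeltaBarDelta t2 Delta s2 b2 m1 (s2 a b) =
  \sum_(p <- sa) \sum_(r <- sb) m1 p.1 p.2 r.1 r.2.
Proof.
move=> Ea Eb; have inner := ext2_inner_bilin hC2 m1_quadlin (Delta b).
rewrite /DeltaBarDelta (ext2_pure hCbC DeltaBarDelta_bilin) /DeltaBar /bar2 Ea.
rewrite (linsum _ _ (ext2_lin hC2 bar2_bilin)) conj_sum (linsum _ _ (ext2_lin hCbCb inner)).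
apply: eq_bigr => p _; rewrite (ext2_pure hC2 bar2_bilin) (ext2_pure hCbCb inner) Eb.
rewrite (linsum _ _ (ext2_lin hC2 (quadlin34 m1_quadlin _ _))).
by apply: eq_bigr => r _; rewrite (ext2_pure hC2 (quadlin34 m1_quadlin _ _)).
Qed.

Lemma IdTauId_quadlin : quadlin (fun x y u v => m2 x u y v).
Proof.
by case: m2_quadlin => h1 h2 h3 h4; split=> [y u v|x u v|x y v|x y u];
  [exact: h1 | exact: h3 | exact: h2 | exact: h4].
Qed.

Lemma IdTauId_lin : linmap (IdTauId m1 m2).
Proof. by case: (ext4_spec hMx1 IdTauId_quadlin). Qed.

Lemma IdTauId_pure x y u v : IdTauId m1 m2 (m1 x y u v) = m2 x u y v.
Proof. by case: (ext4_spec hMx1 IdTauId_quadlin) => _ pure; exact: pure. Qed.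

Section SesquilinearConvolution.
Variables (P Q : CbC -> F^o).
Hypotheses (hP : linmap P) (hQ : linmap Q).

Lemma sesqTensor_lin : linmap (sesqTensor s2 m2 P Q).
Proof. by case: (ext4_spec hMx2 (prod_quadlin s2_bilin s2_bilin hP hQ)). Qed.

Lemma sesqTensor_pure x u y v : sesqTensor s2 m2 P Q (m2 x u y v) = P (s2 x u) * Q (s2 y v).
Proof.
by case: (ext4_spec hMx2 (prod_quadlin s2_bilin s2_bilin hP hQ)) => _ pure; exact: pure.
Qed.

Lemma conv_lin : linmap (conv t2 Delta s2 b2 m1 m2 P Q).
Proof. exact: (lin_comp sesqTensor_lin (lin_comp IdTauId_lin DeltaBarDelta_lin)). Qed.

Lemma conv_expand (a : conjsp C) b (sa sb : seq (C * C)) :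
  Delta a = \sum_(p <- sa) t2 p.1 p.2 -> Delta b = \sum_(r <- sb) t2 r.1 r.2 ->
  conv t2 Delta s2 b2 m1 m2 P Q (s2 a b) =
  \sum_(p <- sa) \sum_(r <- sb) P (s2 p.1 r.1) * Q (s2 p.2 r.2).
Proof.
move=> Ea Eb; rewrite /conv (DeltaBarDelta_expand Ea Eb).
rewrite (linsum _ _ IdTauId_lin) (linsum _ _ sesqTensor_lin).
apply: eq_bigr => p _; rewrite (linsum _ _ IdTauId_lin) (linsum _ _ sesqTensor_lin).
by apply: eq_bigr => r _; rewrite IdTauId_pure sesqTensor_pure.
Qed.

End SesquilinearConvolution.

Section ConvolutionOfForms.
Variables (M K : C2 -> F^o).
Hypotheses (hM : linmap M) (hK : linmap K) (hMinv : beta_invariant t2 t3 beta M).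

Lemma tilde_bilin (G : C2 -> F^o) : linmap G ->
  bilin (fun (a : conjsp C) (b : C) => G (t2 (star a) b)).
Proof.
move=> hG; split=> [b|a]; first exact: (lin_comp hG (lin_comp (t2_linl b) star_lin)).
exact: (lin_comp hG (t2_linr _)).
Qed.

Lemma tildeF_lin (G : C2 -> F^o) : linmap G -> linmap (tildeF t2 star s2 G).
Proof. by move=> hG; exact: (ext2_lin hCbC (tilde_bilin hG)). Qed.

Lemma tildeF_pure (G : C2 -> F^o) : linmap G ->
  forall a b, tildeF t2 star s2 G (s2 a b) = G (t2 (star a) b).
Proof. by move=> hG; exact: (ext2_pure hCbC (tilde_bilin hG)). Qed.

Lemma MId_trilin : trilin (fun a b c => M (t2 a b) *: c : C).
Proof.
split; [|split] => [b c|a c|a b]; last exact: lin_scale.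
- exact: (lin_scalel _ (lin_comp hM (t2_linl b))).
- exact: (lin_scalel _ (lin_comp hM (t2_linr a))).
Qed.

Lemma IdM_trilin : trilin (fun a b c => M (t2 b c) *: a : C).
Proof.
split; [|split] => [b c|a c|a b]; first exact: lin_scale.
- exact: (lin_scalel _ (lin_comp hM (t2_linl c))).
- exact: (lin_scalel _ (lin_comp hM (t2_linr b))).
Qed.

Lemma tensorFun_lin : linmap (tensorFun t2 t4 M K).
Proof. by case: (ext4_spec hC4 (prod_quadlin t2_bilin t2_bilin hM hK)). Qed.

Lemma tensorFun_pure a b c d : tensorFun t2 t4 M K (t4 a b c d) = M (t2 a b) * K (t2 c d).
Proof.
by case: (ext4_spec hC4 (prod_quadlin t2_bilin t2_bilin hM hK)) => _ pure; exact: pure.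
Qed.

Lemma MId_lin : linmap (MId t2 t3 M).
Proof. by case: (ext3_spec hC3 MId_trilin). Qed.

Lemma MId_pure a b c : MId t2 t3 M (t3 a b c) = M (t2 a b) *: c.
Proof. by case: (ext3_spec hC3 MId_trilin) => _ pure; exact: pure. Qed.

Lemma IdM_pure a b c : IdM t2 t3 M (t3 a b c) = M (t2 b c) *: a.
Proof. by case: (ext3_spec hC3 IdM_trilin) => _ pure; exact: pure. Qed.

Lemma tensorFun_middle p v W :
  tensorFun t2 t4 M K (ext2 t2 (fun x y => t4 p x y v) W) =
  K (t2 (MId t2 t3 M (ext2 t2 (fun x y => t3 p x y) W)) v).
Proof.
have mid4 := quadlin23 t4_quadlin p v; have mid3 := trilin23 t3_trilin p.
move: W; apply: (tensor2_ext hC2) => [||x y].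
- exact: (lin_comp tensorFun_lin (ext2_lin hC2 mid4)).
- exact: (lin_comp hK (lin_comp (t2_linl v) (lin_comp MId_lin (ext2_lin hC2 mid3)))).
by rewrite (ext2_pure hC2 mid4) (ext2_pure hC2 mid3) tensorFun_pure MId_pure (linZ (t2_linl v)) (linZ hK).
Qed.

Lemma tensorFun_IdBetaId u v W :
  tensorFun t2 t4 M K (IdBetaId t2 beta t4 (ext2 t2 (fun x y => t4 x y u v) W)) =
  K (t2 (MId t2 t3 M (IdBeta t2 t3 beta (ext2 t2 (fun x y => t3 x y u) W))) v).
Proof.
have right4 := quadlin12 t4_quadlin u v; have right3 := trilin12 t3_trilin u.
move: W; apply: (tensor2_ext hC2) => [||x y].
- exact: (lin_comp tensorFun_lin (lin_comp IdBetaId_lin (ext2_lin hC2 right4))).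
- apply: (lin_comp hK (lin_comp (t2_linl v) (lin_comp MId_lin _))).
  exact: (lin_comp IdBeta_lin (ext2_lin hC2 right3)).
by rewrite (ext2_pure hC2 right4) (ext2_pure hC2 right3) IdBetaId_pure IdBeta_pure tensorFun_middle.
Qed.

(* The heart of the proof, by beta-invariance of M:
   (M (x) K)((id (x) beta (x) id)(beta(x (x) y) (x) u (x) v)) = M(y (x) u) K(x (x) v). *)
Lemma tensorFun_braid x y u v :
  tensorFun t2 t4 M K (IdBetaId t2 beta t4 (ext2 t2 (fun p q => t4 p q u v) (beta (t2 x y)))) =
  M (t2 y u) * K (t2 x v).
Proof.
by rewrite tensorFun_IdBetaId -betaId_pure hMinv IdM_pure (linZ (t2_linl v)) (linZ hK).
Qed.

Lemma starprod_lin : linmap (starprod t2 Delta beta t4 M K).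
Proof.
exact: (lin_comp tensorFun_lin (lin_comp IdBetaId_lin (ext2_lin hC2 DeltaDelta_bilin))).
Qed.

Lemma starprod_expand c b (sa sb : seq (C * C)) :
  Delta c = \sum_(p <- sa) t2 p.1 p.2 -> Delta b = \sum_(r <- sb) t2 r.1 r.2 ->
  starprod t2 Delta beta t4 M K (t2 (star c) b) =
  \sum_(r <- sb) \sum_(p <- sa) M (t2 (star p.1) r.1) * K (t2 (star p.2) r.2).
Proof.
move=> Ec Eb; have right4 r := ext2_lin hC2 (quadlin12 t4_quadlin r.1 r.2).
rewrite /starprod /Lambda (DeltaDelta_expand _ Eb) (linsum _ _ IdBetaId_lin) (linsum _ _ tensorFun_lin).
apply: eq_bigr => r _; rewrite (Delta_star_expand Ec) (linsum _ _ (right4 r)).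
rewrite (linsum _ _ IdBetaId_lin) (linsum _ _ tensorFun_lin).
by apply: eq_bigr => p _; rewrite tensorFun_braid.
Qed.

End ConvolutionOfForms.
End BraidedStarCoalgebra.
Theorem mainTheorem9 (F : numClosedFieldType) (C : lmodType F)
  (* the tensor powers C^{(x)2}, C^{(x)3}, C^{(x)4} *)
  (C2 : lmodType F) (t2 : C -> C -> C2) (C3 : lmodType F) (t3 : C -> C -> C -> C3)
  (C4 : lmodType F) (t4 : C -> C -> C -> C -> C4)
  (* conj(C) (x) C,  conj(C) (x) conj(C),  conj(C)^{(x)2} (x) C^{(x)2},
     and conj(C) (x) C (x) conj(C) (x) C *)
  (CbC : lmodType F) (s2 : conjsp C -> C -> CbC)
  (CbCb : lmodType F) (b2 : conjsp C -> conjsp C -> CbCb)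
  (Mx1 : lmodType F) (m1 : conjsp C -> conjsp C -> C -> C -> Mx1)
  (Mx2 : lmodType F) (m2 : conjsp C -> C -> conjsp C -> C -> Mx2)
  (hC2 : is_tensor2 t2) (hC3 : is_tensor3 t3) (hC4 : is_tensor4 t4)
  (hCbC : is_tensor2 s2) (hCbCb : is_tensor2 b2)
  (hMx1 : is_tensor4 m1) (hMx2 : is_tensor4 m2)
  (* the braided *-coalgebra (C, Delta, delta, beta, star) *)
  (Delta : C -> C2) (delta : C -> F^o) (beta betainv : C2 -> C2) (star : C -> C)
  (hC : braided_star_coalgebra t2 t3 Delta delta beta betainv star)
  (* bilinear forms M, K with M beta-invariant *)
  (M K : C2 -> F^o) (hM : linmap M) (hK : linmap K)
  (hMinv : beta_invariant t2 t3 beta M) :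
  forall w : CbC,
    tildeF t2 star s2 (starprod t2 Delta beta t4 M K) w =
    conv t2 Delta s2 b2 m1 m2 (tildeF t2 star s2 M) (tildeF t2 star s2 K) w.
Proof.
have starprod_lin := starprod_lin hC2 hC4 hC hM hK.
have [tildeM_lin tildeK_lin] := (tildeF_lin hC2 hCbC hC hM, tildeF_lin hC2 hCbC hC hK).
(* both sides are linear in w, so it suffices to compare them on abar (x) b *)
move=> w; apply: (tensor2_ext hCbC) w => [||a b].
- exact: (tildeF_lin hC2 hCbC hC starprod_lin).
- exact: (conv_lin hC2 hCbC hCbCb hMx1 hMx2 hC tildeM_lin tildeK_lin).
have [sa Ea] := tensor2_span hC2 (Delta a); have [sb Eb] := tensor2_span hC2 (Delta b).
rewrite (tildeF_pure hC2 hCbC hC starprod_lin).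
rewrite (starprod_expand hC2 hC3 hC4 hC hM hK hMinv Ea Eb).
rewrite (conv_expand hC2 hCbC hCbCb hMx1 hMx2 hC tildeM_lin tildeK_lin Ea Eb) exchange_big.
by apply: eq_bigr => r _; apply: eq_bigr => p _; rewrite !(tildeF_pure hC2 hCbC hC).
Qed.
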